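(* Let $O^4$ be the set of odd-parity 4-bit strings, let $u=u_1u_2u_3u_4\in O^4$ and let $u'$ be its bitwise complement ($u\oplus u'=1111$). Let $n\ge1$ and let four parties (the first being Alice) hold $X_j=(x^j_1,\dots,x^j_n)\in\{0,1\}^n$, $j=1,\dots,4$, under the promise that $x_i^1x_i^2x_i^3x_i^4\in A$ for all $i$, where $A\subseteq O^4\setminus\{u'\}$ is any fixed set. Let $f_u(X_1,X_2,X_3,X_4)=\bigoplus_{i=1}^n t_u(x_i^1x_i^2x_i^3x_i^4)$ with $t_u(w)=1$ if $w=u$ and $0$ otherwise. Suppose the parties share $n$ copies of $|\psi_4\rangle=2^{-3/2}\big(\sum_{v\in\{0,1\}^4,\,|v|=1}|v\rangle-\sum_{v\in\{0,1\}^4,\,|v|=3}|v\rangle\big)$ (where $|v|$ is the Hamming weight), the $j$-th qubit of each copy held by party $j$. Then there is a protocol in which, for each $i$, party $j$ applies the Hadamard gate $H$ to its qubit of the $i$-th copy if $x_i^j\ne u_j$ and the identity otherwise, measures in the computational basis, performs local classical computation, and parties $2,3,4$ each send one classical bit to Alice (three classical bits in total), after which Alice outputs $f_u(X_1,X_2,X_3,X_4)$ correctly for every input satisfying the promise.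
   Context: $H$ is the Hadamard gate $H|0\rangle=(|0\rangle+|1\rangle)/\sqrt2$, $H|1\rangle=(|0\rangle-|1\rangle)/\sqrt2$. Communication consists only of classical bits sent to Alice; no quantum communication is allowed. *)

(* Real amplitudes over an arbitrary real closed field R
   (all amplitudes of the protocol are real). *)
From mathcomp Require Import all_boot all_order all_algebra.
Set Implicit Arguments. Unset Strict Implicit. Unset Printing Implicit Defensive.
Import Order.TTheory GRing.Theory Num.Theory.

(* 4-bit strings w = w_1 w_2 w_3 w_4, bit j (j : 'I_4) held by party j+1 *)
Definition word := {ffun 'I_4 -> bool}.

Definition weight (w : word) : nat := #|[set j | w j]|.

Definition O4 : {set word} := [set w | odd (weight w)].

Definition compl (w : word) : word := [ffun j => ~~ w j].

Definition t_ (u w : word) : bool := w == u.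
Definition f_ (u : word) (n : nat) (x : 'I_n -> word) : bool :=
  \big[addb/false]_(i < n) t_ u (x i).

Local Open Scope ring_scope.

Definition psi4 (R : rcfType) (v : word) : R :=
  if weight v == 1%N then (2 * Num.sqrt 2)^-1
  else if weight v == 3%N then - (2 * Num.sqrt 2)^-1
  else 0.

Definition hadamard (R : rcfType) (b b' : bool) : R :=
  (if b && b' then -1 else 1) / Num.sqrt 2.

Definition gate (R : rcfType) (c : bool) (b b' : bool) : R :=
  if c then hadamard R b b' else (b == b')%:R.

Definition amp (R : rcfType) (c a : word) : R :=
  \sum_(v : word) (\prod_(j < 4) gate R (c j) (a j) (v j)) * psi4 R v.

(* Born-rule probability of outcome a (amplitudes are real) *)
Definition prob (R : rcfType) (c a : word) : R := amp R c a ^+ 2.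

Definition choice (u x : word) : word := [ffun j => x j != u j].

Definition joint_prob (R : rcfType) (u : word) (n : nat)
  (x : 'I_n -> word) (a : 'I_n -> word) : R :=
  \prod_(i < n) prob R (choice u (x i)) (a i).

Definition p1 : 'I_4 := @Ordinal 4 0 isT.
Definition p2 : 'I_4 := @Ordinal 4 1 isT.
Definition p3 : 'I_4 := @Ordinal 4 2 isT.
Definition p4 : 'I_4 := @Ordinal 4 3 isT.

Definition view (n : nat) (x : 'I_n -> word) (j : 'I_4) : 'I_n -> bool :=
  fun i => x i j.

(* Party j applies H exactly where x_j differs from u_j, so on a promised copy
   (x odd, u odd, x <> u') the set c of Hadamard positions has even size and is
   not the whole of {1,2,3,4}.  For such c, every outcome a observed with
   nonzero probability after rotating |psi_4> has parity odd |a| = [c = 0], i.e.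
   the parity of the four outcome bits is t_u(x).  Each of parties 2, 3, 4
   therefore sends the parity of its n outcomes, and Alice XORs these three bits
   with the parity of her own outcomes to obtain f_u. *)

From mathcomp Require Import all_boot all_order all_algebra.
From mathcomp Require Import ring.
Import Order.TTheory GRing.Theory Num.Theory.
Local Open Scope ring_scope.

Definition mkword (b1 b2 b3 b4 : bool) : word :=
  [ffun j : 'I_4 => match val j with 0 => b1 | 1 => b2 | 2 => b3 | _ => b4 end]%N.

Lemma wordE (w : word) : w = mkword (w p1) (w p2) (w p3) (w p4).
Proof.
apply/ffunP => -[[|[|[|[|k]]]] lt_k4] //; rewrite ffunE; congr (w _); exact: val_inj.
Qed.

Lemma eq_wordE (x y : word) :
  (x == y) = [&& x p1 == y p1, x p2 == y p2, x p3 == y p3 & x p4 == y p4].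
Proof.
apply/eqP/and4P => [-> | [/eqP e1 /eqP e2 /eqP e3 /eqP e4]]; first by rewrite !eqxx.
by rewrite (wordE x) (wordE y) e1 e2 e3 e4.
Qed.

Lemma big_ord4 (T : Type) (idx : T) (op : Monoid.law idx) (F : 'I_4 -> T) :
  \big[op/idx]_(j < 4) F j = op (F p1) (op (F p2) (op (F p3) (F p4))).
Proof.
rewrite !big_ord_recl big_ord0 Monoid.mulm1.
by congr (op (F _) (op (F _) (op (F _) (F _)))); apply: val_inj.
Qed.

Lemma big_word (T : Type) (idx : T) (op : Monoid.com_law idx) (F : word -> T) :
  \big[op/idx]_(w : word) F w =
  \big[op/idx]_(b1 : bool) \big[op/idx]_(b2 : bool) \big[op/idx]_(b3 : bool)
    \big[op/idx]_(b4 : bool) F (mkword b1 b2 b3 b4).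
Proof.
rewrite (pair_bigA _ (fun b1 b2 => \big[op/idx]_(b3 : bool) \big[op/idx]_(b4 : bool)
                                     F (mkword b1 b2 b3 b4))).
rewrite (pair_bigA _ (fun b b3 => \big[op/idx]_(b4 : bool) F (mkword b.1 b.2 b3 b4))).
rewrite (pair_bigA _ (fun b b4 => F (mkword b.1.1 b.1.2 b.2 b4))) /=.
rewrite (reindex (fun b : bool * bool * bool * bool => mkword b.1.1.1 b.1.1.2 b.1.2 b.2)) //.
exists (fun w : word => (w p1, w p2, w p3, w p4)) => [[[[b1 b2] b3] b4] | w] _.
  by rewrite !ffunE.
by rewrite -wordE.
Qed.

Lemma weightE (w : word) : weight w = (w p1 + (w p2 + (w p3 + w p4)))%N.
Proof.
rewrite /weight -sum1_card big_mkcond big_ord4 !inE.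
by case: (w p1); case: (w p2); case: (w p3); case: (w p4).
Qed.

Lemma odd_weight (w : word) : odd (weight w) = w p1 (+) w p2 (+) w p3 (+) w p4.
Proof. by rewrite weightE; case: (w p1); case: (w p2); case: (w p3); case: (w p4). Qed.

Ltac case_bits x y :=
  rewrite !ffunE;
  case: (x p1); case: (x p2); case: (x p3); case: (x p4);
  case: (y p1); case: (y p2); case: (y p3); case: (y p4).

Lemma odd_weight_choice (u x : word) :
  odd (weight (choice u x)) = odd (weight u) (+) odd (weight x).
Proof. by rewrite !odd_weight; case_bits u x. Qed.

Lemma weight_choice_eq0 (u x : word) : (weight (choice u x) == 0%N) = (x == u).
Proof. by rewrite weightE eq_wordE; case_bits u x. Qed.

Lemma weight_choice_eq4 (u x : word) : (weight (choice u x) == 4%N) = (x == compl u).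
Proof. by rewrite weightE eq_wordE; case_bits u x. Qed.

(* Pulling the factors 1/sqrt 2 of H and 1/(2 sqrt 2) of psi_4 out (amp_intE)
   leaves integer amplitudes, whose support can be decided by evaluation. *)
Definition gate_int (c b b' : bool) : int :=
  if c then (if b && b' then -1 else 1) else (b == b')%:R.

Definition psi_int (v : word) : int :=
  if weight v == 1%N then 1 else if weight v == 3%N then -1 else 0.

Definition amp_int (c a : word) : int :=
  \sum_(v : word) (\prod_(j < 4) gate_int (c j) (a j) (v j)) * psi_int v.

Lemma amp_int_parity (c a : word) :
  ~~ odd (weight c) -> weight c != 4%N -> amp_int c a != 0 ->
  odd (weight a) = (weight c == 0%N).
Proof.
rewrite /amp_int big_word !big_bool /= !big_ord4 /psi_int !weightE.
by case_bits c a; vm_compute.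
Qed.

Section Amplitudes.

Variable R : rcfType.

Definition gate_scale (c : bool) : R := if c then (Num.sqrt 2)^-1 else 1.

Lemma gate_intE (c b b' : bool) : gate R c b b' = (gate_int c b b')%:~R * gate_scale c.
Proof.
by case: c; case: b; case: b'; rewrite /gate /hadamard /gate_scale /= ?mulr1 ?mulN1r.
Qed.

Lemma psi4_intE (v : word) : psi4 R v = (psi_int v)%:~R * (2 * Num.sqrt 2)^-1.
Proof.
by rewrite /psi4 /psi_int; case: ifP; last case: ifP; rewrite ?mul1r ?mulN1r ?mul0r.
Qed.

Lemma amp_intE (c a : word) :
  amp R c a = (\prod_(j < 4) gate_scale (c j)) * (2 * Num.sqrt 2)^-1 * (amp_int c a)%:~R.
Proof.
rewrite /amp /amp_int rmorph_sum mulr_sumr; apply: eq_bigr => v _.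
rewrite psi4_intE (eq_bigr _ (fun j _ => gate_intE (c j) (a j) (v j))) big_split /=.
by rewrite rmorphM rmorph_prod /=; ring.
Qed.

Lemma outcome_parity (u x a : word) :
  u \in O4 -> x \in O4 :\ compl u -> prob R (choice u x) a != 0 ->
  odd (weight a) = t_ u x.
Proof.
rewrite !inE => u_odd /andP[x_ne_u' x_odd] prob_neq0.
rewrite /t_ -weight_choice_eq0; apply: amp_int_parity.
- by rewrite odd_weight_choice u_odd x_odd.
- by rewrite weight_choice_eq4.
- by apply: contraNneq prob_neq0; rewrite /prob amp_intE => ->; rewrite mulr0 expr0n.
Qed.

End Amplitudes.

Theorem theorem4 (R : rcfType) (u : word) (hu : u \in O4)
  (A : {set word}) (hA : A \subset O4 :\ compl u) (n : nat) (hn : (1 <= n)%N) :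
  exists (send2 send3 send4 : ('I_n -> bool) -> ('I_n -> bool) -> bool)
         (out : ('I_n -> bool) -> ('I_n -> bool) -> bool -> bool -> bool -> bool),
  forall x : 'I_n -> word, (forall i, x i \in A) ->
  forall a : 'I_n -> word, joint_prob R u x a != 0 ->
    out (view x p1) (view a p1)
        (send2 (view x p2) (view a p2))
        (send3 (view x p3) (view a p3))
        (send4 (view x p4) (view a p4)) = f_ u x.
Proof.
pose parity (X b : 'I_n -> bool) := \big[addb/false]_(i < n) b i.
exists parity, parity, parity, (fun X b b2 b3 b4 => parity X b (+) b2 (+) b3 (+) b4).
move=> x xA a /prodf_neq0 prob_neq0.
rewrite /parity /view /f_ -!big_split /=; apply: eq_bigr => i _.
by rewrite -odd_weight (outcome_parity _ _ _ _ hu (subsetP hA _ (xA i)) (prob_neq0 i isT)).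
Qed.
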